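(* Let $\Omega\in\mathscr A$ be a $1$-admissible set with $\mathscr C_1(\Omega)\neq\emptyset$. If (P.4), (P.5) and (P.6) hold, then there exist $1$-Cheeger sets of $\Omega$ of minimal $\mathfrak m$-measure among all $1$-Cheeger sets of $\Omega$.
   Context: $(X,\mathscr A,\mathfrak m)$ is a non-negative $\sigma$-finite measure space; for $A,B\in\mathscr A$, ''$A\subset B$'' means $\mathfrak m(A\setminus B)=0$. $P\colon\mathscr A\to[0,+\infty]$ is a proper functional. (P.4): if $\chi_{E_k}\to\chi_E$ in $L^1(X,\mathfrak m)$ then $P(E)\le\liminf_k P(E_k)$. (P.5): for every $c\ge0$, $\{\chi_E:E\in\mathscr A,\ P(E)\le c\}$ is compact in $L^1(X,\mathfrak m)$. (P.6): there is $f\colon(0,+\infty)\to(0,+\infty)$ with $\lim_{\varepsilon\to0^+}f(\varepsilon)=+\infty$ such that $\mathfrak m(E)\le\varepsilon$ implies $P(E)\ge f(\varepsilon)\mathfrak m(E)$. $\Omega$ is $1$-admissible if it contains some $E$ with $0<\mathfrak m(E)<+\infty$, $P(E)<+\infty$; $h_1(\Omega)=\inf\{P(E)/\mathfrak m(E): E\subset\Omega,\ 0<\mathfrak m(E)<+\infty,\ P(E)<+\infty\}$; minimizers are $1$-Cheeger sets, forming $\mathscr C_1(\Omega)$. *)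

From HB Require Import structures.
From mathcomp Require Import all_boot all_order all_algebra.
From mathcomp Require Import all_classical all_reals all_analysis.
Set Implicit Arguments. Unset Strict Implicit. Unset Printing Implicit Defensive.
Import Order.TTheory GRing.Theory Num.Theory.
Local Open Scope classical_set_scope.
Local Open Scope ring_scope.

Section Cheeger.
Context (d : measure_display) (X : measurableType d) (R : realType).
Variable m : {measure set X -> \bar R}.
Variable P : set X -> \bar R.

Definition ae_sub (A B : set X) : Prop := m (A `\` B) = 0%E.

Definition chi_L1_cvg (E : nat -> set X) (F : set X) : Prop :=
  (\int[m]_x (`|\1_(E k) x - \1_F x| : R)%:E)%E @[k --> \oo] --> 0%E.

Definition proper_functional : Prop :=
  (forall E, measurable E -> (0 <= P E)%E) /\
  exists E, measurable E /\ (P E < +oo)%E.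

Definition P4 : Prop :=
  forall (E : nat -> set X) (F : set X),
    (forall k, measurable (E k)) -> (forall k, (m (E k) < +oo)%E) ->
    measurable F -> (m F < +oo)%E ->
    chi_L1_cvg E F ->
    (P F <= limn_einf (fun k => P (E k)))%E.

(* (P.5) {chi_E : P(E) <= c} is (sequentially) compact in L^1(X, m) *)
Definition P5 : Prop :=
  forall c : R, 0 <= c ->
  forall E : nat -> set X,
    (forall k, measurable (E k)) -> (forall k, (m (E k) < +oo)%E) ->
    (forall k, (P (E k) <= c%:E)%E) ->
    exists (phi : nat -> nat) (F : set X),
      {homo phi : i j / (i < j)%N >-> (i < j)%N} /\
      measurable F /\ (m F < +oo)%E /\ (P F <= c%:E)%E /\
      chi_L1_cvg (E \o phi) F.

Definition P6 : Prop :=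
  exists f : R -> R,
    (forall e, 0 < e -> 0 < f e) /\
    (f e @[e --> 0^'+] --> +oo) /\
    (forall (e : R) (E : set X), 0 < e -> measurable E -> (m E <= e%:E)%E ->
       ((f e)%:E * m E <= P E)%E).

Definition cheeger_competitor (Om E : set X) : Prop :=
  measurable E /\ ae_sub E Om /\ (0 < m E)%E /\ (m E < +oo)%E /\ (P E < +oo)%E.

Definition ratio (E : set X) : \bar R := (P E * ((fine (m E))^-1)%:E)%E.

Definition admissible1 (Om : set X) : Prop := exists E, cheeger_competitor Om E.

Definition h1 (Om : set X) : \bar R :=
  ereal_inf [set ratio E | E in cheeger_competitor Om].

Definition cheeger1 (Om : set X) : set (set X) :=
  [set E | cheeger_competitor Om E /\ ratio E = h1 Om].

End Cheeger.

From Pilot Require Import Defs.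
From HB Require Import structures.
From mathcomp Require Import all_boot all_order all_algebra.
From mathcomp Require Import all_classical all_reals all_analysis.
From mathcomp Require Import measurable_realfun.
(* Every 1-Cheeger set E satisfies P(E) = h_1(Om) m(E), so by (P.6) the
   measures of 1-Cheeger sets are bounded below by some e > 0, and their
   infimum mu is positive and finite.  A sequence of 1-Cheeger sets whose
   measures converge to mu has perimeters bounded by h_1(Om) (mu + 1), so (P.5)
   yields a subsequence whose characteristic functions converge in L^1 to some
   chi_F.  L^1 convergence of characteristic functions carries the measures and
   the a.e. inclusion in Om to the limit, and (P.4) gives
   P(F) <= h_1(Om) mu = h_1(Om) m(F); hence F is a 1-Cheeger set of measure mu. *)

Set Implicit Arguments. Unset Strict Implicit. Unset Printing Implicit Defensive.
Import Order.TTheory GRing.Theory Num.Theory.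
Local Open Scope classical_set_scope.
Local Open Scope ring_scope.

Lemma cvg_homo_ltn (phi : nat -> nat) :
  {homo phi : i j / (i < j)%N >-> (i < j)%N} -> phi @ \oo --> \oo.
Proof.
move=> phi_lt; have phi_ge k : (k <= phi k)%N.
  by elim: k => // k IHk; apply: leq_ltn_trans IHk (phi_lt _ _ _).
by move=> A [N _ AN]; exists N => // k Nk; apply: AN; apply: leq_trans Nk _.
Qed.

Section minimizing_sequence.
Context {T : Type} {R : realType}.
Local Open Scope ereal_scope.

Lemma minimizing_seq (f : T -> \bar R) (A : set T) :
  ereal_inf (f @` A) \is a fin_num ->
  exists u : nat -> T, [/\ forall k, A (u k),
    forall k, f (u k) <= ereal_inf (f @` A) + (harmonic k)%:E &
    f \o u @ \oo --> ereal_inf (f @` A)].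
Proof.
move=> inf_fin.
have /choice[u /all_and2[Au fu_lt]] : forall k, exists x,
    A x /\ f x < ereal_inf (f @` A) + (harmonic k)%:E.
  move=> k; have [_ [x Ax <-] lt] := lb_ereal_inf_adherent (harmonic_gt0 k) inf_fin.
  by exists x.
exists u; split=> // [k|]; first exact: ltW.
apply: (@squeeze_cvge _ _ _ _ (cst (ereal_inf (f @` A)))
  _ (fun k => ereal_inf (f @` A) + (harmonic k)%:E)).
- apply: nearW => k /=; apply/andP; split; last exact: ltW.
  by apply: ereal_inf_lbound; exists (u k).
- exact: cvg_cst.
- rewrite -[X in _ --> X]adde0; apply: cvgeD; first by rewrite fin_num_adde_defl.
    exact: cvg_cst.
  exact: cvge_harmonic.
Qed.

End minimizing_sequence.

Section set_L1_convergence.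
Context {d : measure_display} {X : measurableType d} {R : realType}.
Variable m : {measure set X -> \bar R}.
Local Open Scope ereal_scope.

Definition chi_dist (A B : set X) : \bar R :=
  \int[m]_x (`|\1_A x - \1_B x| : R)%:E.

Lemma chi_distC A B : chi_dist A B = chi_dist B A.
Proof. by apply: eq_integral => x _; rewrite distrC. Qed.

Lemma measureD_le_chi_dist A B : measurable A -> measurable B ->
  m (A `\` B) <= chi_dist A B.
Proof.
move=> mA mB; have mAB : measurable (A `\` B) by exact: measurableD.
rewrite -[A `\` B]setIT -integral_indic //.
apply: ge0_le_integral => //.
- by apply/measurable_EFinP; exact: measurable_indic.
- apply/measurable_EFinP; apply: measurableT_comp => //.
  by apply: measurable_funB; exact: measurable_indic.
- move=> x _; rewrite lee_fin !indicE.
  have [[Ax nBx]|nABx] := pselect ((A `\` B) x).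
    by rewrite (mem_set Ax) (memNset nBx) mem_set // subr0 normr1.
  by rewrite (memNset nABx) normr_ge0.
Qed.

Lemma measureD_triangle A B C :
  measurable A -> measurable B -> measurable C ->
  m (A `\` C) <= m (A `\` B) + m (B `\` C).
Proof.
move=> mA mB mC.
have [mAB mBC] : measurable (A `\` B) /\ measurable (B `\` C).
  by split; exact: measurableD.
apply: le_trans (measureU2 m mAB mBC).
apply: le_measure; rewrite ?inE; [exact: measurableD | exact: measurableU |].
by move=> x [Ax nCx]; have [Bx|nBx] := pselect (B x); [right | left].
Qed.

Variables (E : nat -> set X) (F : set X).
Hypotheses (mE : forall k, measurable (E k)) (mF : measurable F).
Hypothesis EF : chi_L1_cvg m E F.

Lemma chi_L1_cvg_measureD :
  m (E k `\` F) @[k --> \oo] --> 0 /\ m (F `\` E k) @[k --> \oo] --> 0.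
Proof.
have squeeze (D : nat -> set X) : (forall k, 0 <= m (D k) <= chi_dist (E k) F) ->
    m (D k) @[k --> \oo] --> 0.
  move=> D_le; apply: (@squeeze_cvge _ _ _ _ (cst 0) _ (fun k => chi_dist (E k) F)).
  - exact: nearW.
  - exact: cvg_cst.
  - exact: EF.
split; apply: squeeze => k; rewrite measure_ge0 /=.
  exact: measureD_le_chi_dist.
by rewrite chi_distC; exact: measureD_le_chi_dist.
Qed.

Lemma chi_L1_cvg_measure : m F < +oo -> m (E k) @[k --> \oo] --> m F.
Proof.
move=> mFoo; have [EDF FDE] := chi_L1_cvg_measureD.
have mF_fin : m F \is a fin_num by rewrite ge0_fin_numE.
have mFDE_fin k : m (F `\` E k) \is a fin_num.
  rewrite ge0_fin_numE // (le_lt_trans _ mFoo) // le_measure ?inE //.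
  exact: measurableD.
apply: (@squeeze_cvge _ _ _ _ (fun k => m F - m (F `\` E k)) _
  (fun k => m (E k `\` F) + m F)).
- apply: nearW => k; apply/andP; split.
    rewrite leeBlDl //; have := measureD_triangle mF (mE k) measurable0.
    by rewrite !setD0.
  have := measureD_triangle (mE k) mF measurable0.
  by rewrite !setD0.
- rewrite -[X in _ --> X]sube0.
  apply: (@cvgeB _ _ _ _ (cst (m F))) => //; last exact: cvg_cst.
  by rewrite fin_num_adde_defl.
- rewrite -[X in _ --> X]add0e.
  by apply: (@cvgeD _ _ _ _ _ (cst (m F))) => //; exact: cvg_cst.
Qed.

Lemma chi_L1_cvg_ae_sub (Om : set X) : measurable Om ->
  (forall k, ae_sub m (E k) Om) -> ae_sub m F Om.
Proof.
move=> mOm EOm; have [_ FDE] := chi_L1_cvg_measureD.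
apply/eqP; rewrite eq_le measure_ge0 andbT.
apply: (cvge_to_ge FDE); apply: nearW => k.
by rewrite -[leRHS]adde0 -(EOm k); exact: measureD_triangle.
Qed.

End set_L1_convergence.

Section cheeger_sets.
Context {d : measure_display} {X : measurableType d} {R : realType}.
Variables (m : {measure set X -> \bar R}) (P : set X -> \bar R) (Om : set X).
Hypothesis P_ge0 : forall E, measurable E -> (0 <= P E)%E.
Local Open Scope ereal_scope.

Lemma cheeger_competitor_measure_fin E : cheeger_competitor m P Om E ->
  m E = (fine (m E))%:E /\ (0 < fine (m E))%R.
Proof.
move=> [_ [_ [mE_gt0 [mE_lt _]]]].
have mE_fin : m E \is a fin_num by rewrite ge0_fin_numE.
by split; [rewrite fineK | rewrite -lte_fin fineK].
Qed.

Lemma cheeger_competitor_ratioK E : cheeger_competitor m P Om E ->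
  Defs.ratio m P E * m E = P E.
Proof.
move=> /[dup] /cheeger_competitor_measure_fin[-> mE_gt0] _.
by rewrite /Defs.ratio -muleA -EFinM mulVf ?gt_eqF // mule1.
Qed.

Lemma h1_ge0 : 0 <= h1 m P Om.
Proof.
apply: le_ereal_inf_tmp => _ [E [mE _] <-].
by rewrite mule_ge0 ?P_ge0 // lee_fin invr_ge0 fine_ge0.
Qed.

Lemma h1_le_ratio E : cheeger_competitor m P Om E -> h1 m P Om <= Defs.ratio m P E.
Proof. by move=> cE; apply: ereal_inf_lbound; exists E. Qed.

Lemma cheeger1_h1_fin_num E : cheeger1 m P Om E -> h1 m P Om \is a fin_num.
Proof.
move=> [[mE [_ [_ [_ PE_lt]]]] <-].
by rewrite /Defs.ratio fin_numM // ge0_fin_numE ?P_ge0.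
Qed.

Lemma cheeger1_P E : cheeger1 m P Om E -> P E = h1 m P Om * m E.
Proof. by move=> [cE <-]; rewrite cheeger_competitor_ratioK. Qed.

Lemma cheeger1_of_P_le F : cheeger_competitor m P Om F ->
  P F <= h1 m P Om * m F -> cheeger1 m P Om F.
Proof.
move=> cF PF_le; split => //; apply/eqP; rewrite eq_le (h1_le_ratio cF) andbT.
have [mFE mF_gt0] := cheeger_competitor_measure_fin cF.
rewrite /Defs.ratio; apply: le_trans (lee_wpmul2r _ PF_le) _.
  by rewrite lee_fin invr_ge0 ltW.
by rewrite mFE -muleA -EFinM mulfV ?gt_eqF // mule1.
Qed.

Lemma cheeger1_measure_gt : P6 m P -> h1 m P Om \is a fin_num ->
  exists2 e : R, (0 < e)%R & forall E, cheeger1 m P Om E -> e%:E < m E.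
Proof.
move=> [f [f_gt0 [f_cvgy fP]]] h1_fin.
have [e [e_gt0 h1_lt]] : exists e, (0 < e)%R /\ (fine (h1 m P Om) < f e)%R.
  have : \forall e \near 0^'+, (0 < e)%R /\ (fine (h1 m P Om) < f e)%R.
    by near=> e; split; near: e; [exact: nbhs_right_gt | exact: cvgry_gt].
  by move=> /filter_ex.
exists e => // E CE; rewrite ltNge; apply/negP => mE_le.
have [cE _] := CE; have [mEE mE_gt0] := cheeger_competitor_measure_fin cE.
have := fP e E e_gt0 cE.1 mE_le.
rewrite cheeger1_P // -(fineK h1_fin) mEE lee_pmul2r ?lte_fin // lee_fin.
by rewrite leNgt h1_lt.
Unshelve. all: by end_near. Qed.

Lemma cheeger1_inf_measure_gt0 : P6 m P -> h1 m P Om \is a fin_num ->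
  0 < ereal_inf (m @` cheeger1 m P Om).
Proof.
move=> P6_small h1_fin.
have [e e_gt0 cheeger1_gt] := cheeger1_measure_gt P6_small h1_fin.
apply: (@lt_le_trans _ _ e%:E); first by rewrite lte_fin.
by apply: le_ereal_inf_tmp => _ [E CE <-]; exact/ltW/cheeger1_gt.
Qed.

Lemma cheeger1_L1_limit (E : nat -> set X) (F : set X) (l : \bar R) :
  P4 m P -> measurable Om -> (forall k, cheeger1 m P Om (E k)) ->
  m (E k) @[k --> \oo] --> l -> 0 < l ->
  measurable F -> m F < +oo -> chi_L1_cvg m E F ->
  cheeger1 m P Om F /\ m F = l.
Proof.
move=> P4_lsc mOm CE mE_l l_gt0 mF mF_lt EF.
have mE k : measurable (E k) := (CE k).1.1.
have h1_fin := cheeger1_h1_fin_num (CE 0%N).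
have mF_l : m F = l.
  have mE_mF := chi_L1_cvg_measure mE mF EF mF_lt.
  exact: (@cvg_unique _ (@ereal_hausdorff R) _ _ _ _ mE_mF mE_l).
have PF_le : P F <= h1 m P Om * m F.
  apply: le_trans (P4_lsc _ _ mE (fun k => (CE k).1.2.2.2.1) mF mF_lt EF) _.
  rewrite mF_l (cvg_limn_einf_sup (_ : _ @ \oo --> h1 m P Om * l)).1 //.
  under eq_fun => k do rewrite (cheeger1_P (CE k)).
  exact: cvgeZl h1_fin mE_l.
have cF : cheeger_competitor m P Om F.
  split=> //; split.
    by apply: (chi_L1_cvg_ae_sub mE mF EF mOm) => k; exact: (CE k).1.2.1.
  split; first by rewrite mF_l.
  split=> //; apply: le_lt_trans PF_le _.
  by rewrite ltey_eq fin_numM // ge0_fin_numE.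
by split=> //; exact: cheeger1_of_P_le.
Qed.

End cheeger_sets.

Theorem proposition3p15 (d : measure_display) (X : measurableType d) (R : realType)
  (m : {measure set X -> \bar R}) (P : set X -> \bar R) (Om : set X) :
  sigma_finite setT m ->
  proper_functional P ->
  measurable Om ->
  admissible1 m P Om ->
  cheeger1 m P Om !=set0 ->
  P4 m P -> P5 m P -> P6 m P ->
  exists E, cheeger1 m P Om E /\
    (forall F, cheeger1 m P Om F -> (m E <= m F)%E).
Proof.
move=> _ [P_ge0 _] mOm _ [E0 CE0] P4_lsc P5_cpt P6_small.
have h1_fin := cheeger1_h1_fin_num P_ge0 CE0.
set mu := ereal_inf (m @` cheeger1 m P Om).
have mu_gt0 : (0 < mu)%E := cheeger1_inf_measure_gt0 P6_small h1_fin.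
have mu_fin : mu \is a fin_num.
  rewrite ge0_fin_numE ?ltW //.
  by apply: le_lt_trans (ereal_inf_lbound _) (CE0.1.2.2.2.1); exists E0.
have [Es [CEs mEs_le mEs_mu]] := minimizing_seq mu_fin.
set c := fine (h1 m P Om * (mu + 1%:E))%E.
have c_fin : (h1 m P Om * (mu + 1%:E))%E \is a fin_num.
  by rewrite fin_numM ?fin_numD ?mu_fin.
have PEs_le k : (P (Es k) <= c%:E)%E.
  rewrite fineK // (cheeger1_P (CEs k)) lee_wpmul2l ?h1_ge0 //.
  by apply: le_trans (mEs_le k) _; rewrite leeD2l // lee_fin /= invf_le1 // ler1n.
have c_ge0 : 0 <= c by rewrite fine_ge0 // mule_ge0 ?h1_ge0 // adde_ge0 // ltW.
have [phi [F [phi_lt [mF [mF_lt [_ EF]]]]]] :=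
  P5_cpt c c_ge0 Es (fun k => (CEs k).1.1) (fun k => (CEs k).1.2.2.2.1) PEs_le.
have mEs_phi_mu : m (Es (phi k)) @[k --> \oo] --> mu.
  exact: cvg_comp (cvg_homo_ltn phi_lt) mEs_mu.
have [CF mF_mu] := cheeger1_L1_limit P_ge0 P4_lsc mOm (fun k => CEs (phi k))
  mEs_phi_mu mu_gt0 mF mF_lt EF.
exists F; split=> // F' CF'; rewrite mF_mu.
by apply: ereal_inf_lbound; exists F'.
Qed.
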